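(* Let $q>0$. The following statements are equivalent: (i) the weight $w_q$ is unique; (ii) $w_q(\mathbf m)=1$ for every proper loop $\mathbf m$ for $q$; (iii) $w_q(\mathbf m)=w_q(\mathbf n)$ for all non-trivial proper loops $\mathbf m,\mathbf n$ for $q$.
   Context: Let $q>0$. For $k\ge0$ and $\mathbf m=(m_0,\dots,m_k)\in\mathbb Z^{k+1}$ put $\mathbf m_j=(m_0,\dots,m_j)$; define $c(q,\mathbf m_0)=m_0$ and $c(q,\mathbf m_j)=m_j+\frac{1}{q\,c(q,\mathbf m_{j-1})}$ for $1\le j\le k$. $\mathbf m$ is a path for $q$ of length $k$ if $c(q,\mathbf m_j)\ne0$ for $0\le j\le k-1$; it is proper if $m_j\ne0$ for $0\le j\le k-1$. The weight of a path is $w_q(\mathbf m)=q^{k/2}\prod_{j=0}^{k-1}|c(q,\mathbf m_j)|$ (and $1$ if $k=0$). A loop is a path with $c(q,\mathbf m)=0$; the trivial loop is $(0)$. The weight $w_q$ is unique if $w_q(\mathbf m)=w_q(\mathbf n)$ for all paths $\mathbf m,\mathbf n$ for $q$ with $c(q,\mathbf m)=c(q,\mathbf n)$. *)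

From Stdlib Require Import Reals ZArith List.
Open Scope R_scope.

(* A sequence m = (m_0, ..., m_k) in Z^{k+1} is represented by a nonempty
   list of integers; its length k is (length m - 1). *)
Definition len (m : list Z) : nat := (length m - 1)%nat.

Fixpoint cf (q : R) (m : list Z) (j : nat) : R :=
  match j with
  | O => IZR (nth 0 m 0%Z)
  | S j' => IZR (nth j m 0%Z) + / (q * cf q m j')
  end.

Definition cval (q : R) (m : list Z) : R := cf q m (len m).

Definition is_path (q : R) (m : list Z) : Prop :=
  m <> nil /\ forall j, (j < len m)%nat -> cf q m j <> 0.

Definition proper (m : list Z) : Prop :=
  forall j, (j < len m)%nat -> nth j m 0%Z <> 0%Z.

Fixpoint cprod (q : R) (m : list Z) (n : nat) : R :=
  match n with
  | O => 1
  | S n' => cprod q m n' * Rabs (cf q m n')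
  end.

Definition weight (q : R) (m : list Z) : R :=
  sqrt q ^ len m * cprod q m (len m).

Definition is_loop (q : R) (m : list Z) : Prop :=
  is_path q m /\ cval q m = 0.

Definition trivial_loop : list Z := (0%Z :: nil).

Definition unique_weight (q : R) : Prop :=
  forall m n, is_path q m -> is_path q n -> cval q m = cval q n ->
    weight q m = weight q n.

From Stdlib Require Import Reals ZArith List Lra Lia Classical.
Open Scope R_scope.

(* Three surgeries on integer sequences control weights. A zero entry m_(j+1) = 0 of a
   path can be excised, merging m_j and m_(j+2), without changing the c-value or the
   weight (the factors |c_j| and |c_(j+1)| = 1/(q |c_j|) cancel against q), so every
   path reduces to a proper one. Two paths m, n with the same c-value glue, running
   back along n with negated entries, into a loop of weight w(m)/w(n). A loop followed
   by a path multiplies weights. Hence if proper loops have weight 1, so do all loops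
   and thus w(m) = w(n); and if nontrivial proper loops share a weight, comparing a
   proper loop with itself glued to itself gives w(m)^2 = w(m), so w(m) = 1. *)

(* Sequences are handled as functions [nat -> Z] with an explicit length [K];
   [nthZ] and [to_list] translate to and from the list encoding of the statement. *)

Fixpoint cseq (q : R) (f : nat -> Z) (j : nat) : R :=
  match j with
  | O => IZR (f 0%nat)
  | S j' => IZR (f j) + / (q * cseq q f j')
  end.

Fixpoint wseq (q : R) (f : nat -> Z) (n : nat) : R :=
  match n with
  | O => 1
  | S n' => wseq q f n' * (sqrt q * Rabs (cseq q f n'))
  end.

Definition path_seq (q : R) (f : nat -> Z) (K : nat) : Prop :=
  forall j, (j < K)%nat -> cseq q f j <> 0.

Definition loop_seq (q : R) (f : nat -> Z) (K : nat) : Prop :=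
  path_seq q f K /\ cseq q f K = 0.

Definition proper_seq (f : nat -> Z) (K : nat) : Prop :=
  forall j, (j < K)%nat -> f j <> 0%Z.

Lemma cseq_S q f j : cseq q f (S j) = IZR (f (S j)) + / (q * cseq q f j).
Proof. reflexivity. Qed.

Lemma wseq_S q f n : wseq q f (S n) = wseq q f n * (sqrt q * Rabs (cseq q f n)).
Proof. reflexivity. Qed.

Lemma cseq_ext q f g j :
  (forall i, (i <= j)%nat -> f i = g i) -> cseq q f j = cseq q g j.
Proof.
  induction j as [|j IH]; intros Hfg; simpl.
  - now rewrite Hfg.
  - rewrite (Hfg (S j)) by lia.
    rewrite IH; [reflexivity|intros; apply Hfg; lia].
Qed.

Lemma cseq_last_entry q f g j :
  (forall i, (i < j)%nat -> f i = g i) -> cseq q g j = cseq q f j + IZR (g j - f j).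
Proof.
  intros Hfg. rewrite minus_IZR. destruct j as [|j].
  - simpl. ring.
  - rewrite !cseq_S, (cseq_ext q f g j) by (intros; apply Hfg; lia). ring.
Qed.

Lemma wseq_ext q f g n :
  (forall i, (i < n)%nat -> cseq q f i = cseq q g i) -> wseq q f n = wseq q g n.
Proof.
  induction n as [|n IH]; intros Hfg; simpl; [reflexivity|].
  rewrite Hfg by lia.
  rewrite IH; [reflexivity|intros; apply Hfg; lia].
Qed.

Lemma wseq_pos q f n : 0 < q -> path_seq q f n -> 0 < wseq q f n.
Proof.
  intros hq Hp. induction n as [|n IH]; simpl; [lra|].
  apply Rmult_lt_0_compat.
  - apply IH. intros j Hj. apply Hp. lia.
  - apply Rmult_lt_0_compat; [apply sqrt_lt_R0, hq|apply Rabs_pos_lt, Hp; lia].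
Qed.

Lemma Rinv_mult_inv q c : q <> 0 -> / (q * / (q * c)) = c.
Proof. intros hq. rewrite Rinv_mult, Rinv_inv. field. exact hq. Qed.

Lemma weight_factor_inv q c :
  0 < q -> c <> 0 -> sqrt q * Rabs c * (sqrt q * Rabs (/ (q * c))) = 1.
Proof.
  intros hq hc.
  transitivity ((sqrt q * sqrt q) * Rabs (c * / (q * c))).
  { rewrite Rabs_mult. ring. }
  rewrite sqrt_sqrt by lra.
  replace (c * / (q * c)) with (/ q) by (field; lra).
  rewrite Rabs_right by (left; apply Rinv_0_lt_compat, hq).
  field. lra.
Qed.

Definition splice (f : nat -> Z) (p : nat) (a : Z) (r : nat -> Z) (i : nat) : Z :=
  if (i <? p)%nat then f i else if (i =? p)%nat then a else r (i - S p)%nat.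

Section Splice.

Variables (q : R) (f r : nat -> Z) (p : nat) (a : Z).

Lemma cseq_splice_lt i : (i < p)%nat -> cseq q (splice f p a r) i = cseq q f i.
Proof.
  intros Hi. apply cseq_ext. intros i' Hi'. unfold splice.
  destruct (Nat.ltb_spec i' p); [reflexivity|lia].
Qed.

Lemma cseq_splice_at : cseq q (splice f p a r) p = cseq q f p + IZR (a - f p).
Proof.
  rewrite (cseq_last_entry q f (splice f p a r) p).
  - unfold splice. now rewrite Nat.ltb_irrefl, Nat.eqb_refl.
  - intros i Hi. unfold splice. now destruct (Nat.ltb_spec i p); [|lia].
Qed.

Lemma cseq_splice_gt j :
  cseq q (splice f p a r) (S (p + j)) = IZR (r j) + / (q * cseq q (splice f p a r) (p + j)).
Proof.
  rewrite cseq_S. unfold splice at 1.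
  destruct (Nat.ltb_spec (S (p + j)) p); [lia|].
  destruct (Nat.eqb_spec (S (p + j)) p); [lia|].
  now replace (S (p + j) - S p)%nat with j by lia.
Qed.

Lemma wseq_splice_at : wseq q (splice f p a r) p = wseq q f p.
Proof. apply wseq_ext. intros i Hi. now apply cseq_splice_lt. Qed.

End Splice.

Definition excise (f : nat -> Z) (p : nat) : nat -> Z :=
  splice f p (f p + f (S (S p)))%Z (fun j => f (S (S (S (p + j))))).

Section Excise.

Variables (q : R) (f : nat -> Z) (p : nat).
Hypotheses (hq : 0 < q) (Hcp : cseq q f p <> 0) (Hz : f (S p) = 0%Z).

(* Since c_(p+1) = 1/(q c_p), the next value is c_(p+2) = f_(p+2) + c_p. *)
Lemma cseq_excise t : cseq q (excise f p) (p + t) = cseq q f (S (S (p + t))).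
Proof.
  induction t as [|t IH].
  - rewrite Nat.add_0_r. unfold excise. rewrite cseq_splice_at, Z.add_simpl_l.
    rewrite !cseq_S, Hz, Rplus_0_l, Rinv_mult_inv by lra. ring.
  - rewrite Nat.add_succ_r. unfold excise. rewrite cseq_splice_gt.
    fold (excise f p). now rewrite IH.
Qed.

Lemma wseq_excise t : wseq q (excise f p) (p + t) = wseq q f (S (S (p + t))).
Proof.
  induction t as [|t IH].
  - rewrite Nat.add_0_r. unfold excise. rewrite wseq_splice_at, !wseq_S.
    rewrite (cseq_S q f p), Hz, Rplus_0_l, Rmult_assoc, weight_factor_inv by assumption.
    ring.
  - rewrite Nat.add_succ_r, wseq_S, IH, cseq_excise. reflexivity.
Qed.

End Excise.

Lemma path_excise q f K p :
  0 < q -> path_seq q f K -> f (S p) = 0%Z -> (S (S p) <= K)%nat ->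
  path_seq q (excise f p) (K - 2) /\
  cseq q (excise f p) (K - 2) = cseq q f K /\
  wseq q (excise f p) (K - 2) = wseq q f K.
Proof.
  intros hq Hp Hz HK.
  assert (Hcp : cseq q f p <> 0) by (apply Hp; lia).
  destruct (Nat.le_exists_sub (S (S p)) K HK) as [t [-> _]].
  replace (t + S (S p) - 2)%nat with (p + t)%nat by lia.
  replace (t + S (S p))%nat with (S (S (p + t))) by lia.
  split; [|split]; [|apply cseq_excise|apply wseq_excise]; try assumption.
  intros i Hi. destruct (Nat.ltb_spec i p).
  - unfold excise. rewrite cseq_splice_lt by assumption. apply Hp. lia.
  - replace i with (p + (i - p))%nat by lia.
    rewrite cseq_excise by assumption. apply Hp. lia.
Qed.

(* A zero at index 0 cannot occur: c_0 = f_0 is nonzero on a path of positive length. *)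
Lemma proper_path_reduction q (hq : 0 < q) K f :
  path_seq q f K ->
  exists g K', path_seq q g K' /\ proper_seq g K' /\
    cseq q g K' = cseq q f K /\ wseq q g K' = wseq q f K.
Proof.
  revert f. induction K as [K IH] using lt_wf_ind. intros f Hp.
  destruct (classic (proper_seq f K)) as [Hpr|Hnpr]; [now exists f, K|].
  apply not_all_ex_not in Hnpr as [z Hz].
  apply imply_to_and in Hz as [HzK Hz]. apply NNPP in Hz.
  destruct z as [|p].
  - exfalso. apply (Hp 0%nat HzK). simpl. now rewrite Hz.
  - destruct (path_excise q f K p hq Hp Hz) as [Hp' [Hc' Hw']]; [lia|].
    destruct (IH (K - 2)%nat ltac:(lia) (excise f p) Hp') as [g [K' [Hg [Hgp [Hgc Hgw]]]]].
    exists g, K'. repeat split; try assumption; congruence.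
Qed.

(* [f_0, ..., f_(k-1), f_k - h_l, -h_(l-1), ..., -h_0]: runs along f and back along h. *)
Definition glue (f : nat -> Z) (k : nat) (h : nat -> Z) (l : nat) : nat -> Z :=
  splice f k (f k - h l)%Z (fun j => (- h (l - S j)%nat)%Z).

Section Glue.

Variables (q : R) (f h : nat -> Z) (k l : nat).
Hypotheses (hq : 0 < q) (Hf : path_seq q f k) (Hh : path_seq q h l)
  (Hfh : cseq q f k = cseq q h l).

Lemma cseq_glue t :
  (t <= l)%nat -> cseq q (glue f k h l) (k + t) = cseq q h (l - t) - IZR (h (l - t)%nat).
Proof.
  induction t as [|t IH]; intros Ht.
  - rewrite Nat.add_0_r, Nat.sub_0_r. unfold glue.
    rewrite cseq_splice_at, Hfh, !minus_IZR. ring.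
  - rewrite Nat.add_succ_r. unfold glue. rewrite cseq_splice_gt.
    fold (glue f k h l). rewrite IH by lia.
    replace (l - t)%nat with (S (l - S t)) by lia.
    rewrite cseq_S, opp_IZR, Rplus_minus_l, Rinv_mult_inv by lra. ring.
Qed.

Lemma cseq_glue_tail t :
  (t < l)%nat -> cseq q (glue f k h l) (k + t) = / (q * cseq q h (l - S t)).
Proof.
  intros Ht. rewrite cseq_glue by lia.
  replace (l - t)%nat with (S (l - S t)) by lia.
  rewrite cseq_S. ring.
Qed.

Lemma wseq_glue t :
  (t <= l)%nat ->
  wseq q (glue f k h l) (k + t) * wseq q h l = wseq q f k * wseq q h (l - t).
Proof.
  induction t as [|t IH]; intros Ht.
  - rewrite Nat.add_0_r, Nat.sub_0_r. unfold glue. now rewrite wseq_splice_at.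
  - rewrite Nat.add_succ_r, wseq_S, cseq_glue_tail by lia.
    replace (l - t)%nat with (S (l - S t)) in IH by lia.
    rewrite wseq_S in IH.
    rewrite <- (Rmult_1_r (wseq q f k * wseq q h (l - S t))).
    rewrite <- (weight_factor_inv q (cseq q h (l - S t))) by (lra || (apply Hh; lia)).
    transitivity (wseq q (glue f k h l) (k + t) * wseq q h l
                  * (sqrt q * Rabs (/ (q * cseq q h (l - S t))))); [ring|].
    rewrite IH by lia. ring.
Qed.

Lemma loop_glue :
  loop_seq q (glue f k h l) (k + l) /\
  wseq q (glue f k h l) (k + l) * wseq q h l = wseq q f k.
Proof.
  split; [split|].
  - intros i Hi. destruct (Nat.ltb_spec i k).
    + unfold glue. rewrite cseq_splice_lt by assumption. now apply Hf.
    + replace i with (k + (i - k))%nat by lia.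
      rewrite cseq_glue_tail by lia.
      apply Rinv_neq_0_compat, Rmult_integral_contrapositive.
      split; [lra|apply Hh; lia].
  - rewrite cseq_glue, Nat.sub_diag by lia. simpl. ring.
  - rewrite wseq_glue, Nat.sub_diag by lia. simpl. ring.
Qed.

End Glue.

Definition concat (f : nat -> Z) (K : nat) (s : Z) (h : nat -> Z) : nat -> Z :=
  splice f K (f K + s * h 0%nat)%Z (fun j => (s * h (S j))%Z).

Lemma Rinv_mult_sign (s : Z) (x : R) :
  (s = 1 \/ s = -1)%Z -> / (IZR s * x) = IZR s * / x.
Proof.
  intros [-> | ->]; simpl.
  - now rewrite !Rmult_1_l.
  - replace (-1 * x) with (- x) by ring. rewrite Rinv_opp. ring.
Qed.

Lemma Rabs_sign (s : Z) : (s = 1 \/ s = -1)%Z -> Rabs (IZR s) = 1.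
Proof. intros [-> | ->]; unfold Rabs; destruct Rcase_abs; lra. Qed.

Section Concat.

Variables (q : R) (f h : nat -> Z) (K : nat) (s : Z).
Hypotheses (Hs : (s = 1 \/ s = -1)%Z).

Lemma cseq_concat t : cseq q f K = 0 -> cseq q (concat f K s h) (K + t) = IZR s * cseq q h t.
Proof.
  intros Hc. induction t as [|t IH].
  - rewrite Nat.add_0_r. unfold concat.
    rewrite cseq_splice_at, Hc, Z.add_simpl_l, mult_IZR. simpl. ring.
  - rewrite Nat.add_succ_r. unfold concat. rewrite cseq_splice_gt.
    fold (concat f K s h). rewrite IH, cseq_S, mult_IZR.
    replace (q * (IZR s * cseq q h t)) with (IZR s * (q * cseq q h t)) by ring.
    rewrite Rinv_mult_sign by assumption. ring.
Qed.

Lemma wseq_concat t : cseq q f K = 0 -> wseq q (concat f K s h) (K + t) = wseq q f K * wseq q h t.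
Proof.
  intros Hc. induction t as [|t IH].
  - rewrite Nat.add_0_r. unfold concat. rewrite wseq_splice_at. simpl. ring.
  - rewrite Nat.add_succ_r, !wseq_S, IH, cseq_concat, Rabs_mult, Rabs_sign by assumption.
    ring.
Qed.

Lemma path_concat L :
  loop_seq q f K -> path_seq q h L ->
  path_seq q (concat f K s h) (K + L) /\
  cseq q (concat f K s h) (K + L) = IZR s * cseq q h L /\
  wseq q (concat f K s h) (K + L) = wseq q f K * wseq q h L.
Proof.
  intros [Hf Hc] Hh. split; [|split]; [|now apply cseq_concat|now apply wseq_concat].
  intros i Hi. destruct (Nat.ltb_spec i K).
  - unfold concat. rewrite cseq_splice_lt by assumption. now apply Hf.
  - replace i with (K + (i - K))%nat by lia. rewrite cseq_concat by assumption.
    apply Rmult_integral_contrapositive. split.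
    + destruct Hs as [-> | ->]; simpl; lra.
    + apply Hh. lia.
Qed.

Lemma proper_concat L :
  proper_seq f K -> proper_seq h L -> (f K + s * h 0%nat <> 0)%Z ->
  proper_seq (concat f K s h) (K + L).
Proof.
  intros Hf Hh Hjoin i Hi. unfold concat, splice.
  destruct (Nat.ltb_spec i K); [now apply Hf|].
  destruct (Nat.eqb_spec i K); [assumption|].
  assert (h (S (i - S K)) <> 0%Z) by (apply Hh; lia).
  destruct Hs as [-> | ->]; lia.
Qed.

End Concat.

(* Gluing a proper loop to itself, with the sign chosen so that the seam is nonzero. *)
Lemma proper_loop_double q f K :
  loop_seq q f K -> proper_seq f K -> (0 < K)%nat ->
  exists g, loop_seq q g (K + K) /\ proper_seq g (K + K) /\
    wseq q g (K + K) = wseq q f K * wseq q f K.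
Proof.
  intros Hl Hpr HK.
  assert (Hf0 : f 0%nat <> 0%Z) by (apply Hpr; exact HK).
  assert (Hs : exists s, (s = 1 \/ s = -1)%Z /\ (f K + s * f 0%nat <> 0)%Z).
  { destruct (Z.eq_dec (f K + f 0%nat) 0) as [E|E]; [exists (-1)%Z|exists 1%Z]; lia. }
  destruct Hs as [s [Hs Hseam]].
  destruct (path_concat q f f K s Hs K Hl (proj1 Hl)) as [Hp [Hc Hw]].
  exists (concat f K s f). split; [split|split]; try assumption.
  - rewrite Hc, (proj2 Hl). ring.
  - now apply proper_concat.
Qed.

Definition nthZ (m : list Z) (i : nat) : Z := nth i m 0%Z.

Definition to_list (f : nat -> Z) (K : nat) : list Z := map f (seq 0 (S K)).

Lemma cf_nthZ q m j : cf q m j = cseq q (nthZ m) j.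
Proof. induction j as [|j IH]; simpl; [reflexivity|now rewrite IH]. Qed.

Lemma weight_nthZ q m : weight q m = wseq q (nthZ m) (len m).
Proof.
  unfold weight. induction (len m) as [|n IH]; simpl; [ring|].
  rewrite <- IH, cf_nthZ. ring.
Qed.

Lemma path_seq_nthZ q m : is_path q m -> path_seq q (nthZ m) (len m).
Proof. intros [_ Hp] j Hj. rewrite <- cf_nthZ. now apply Hp. Qed.

Lemma loop_seq_nthZ q m : is_loop q m -> loop_seq q (nthZ m) (len m).
Proof.
  intros [Hp Hc]. split; [now apply path_seq_nthZ|].
  unfold cval in Hc. now rewrite <- cf_nthZ.
Qed.

Lemma len_to_list f K : len (to_list f K) = K.
Proof. unfold len, to_list. rewrite length_map, length_seq. lia. Qed.

Lemma nthZ_to_list f K i : (i <= K)%nat -> nthZ (to_list f K) i = f i.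
Proof.
  intros Hi. unfold nthZ, to_list.
  rewrite nth_indep with (d' := f 0%nat) by (rewrite length_map, length_seq; lia).
  rewrite map_nth, seq_nth by lia. reflexivity.
Qed.

Lemma cf_to_list q f K j : (j <= K)%nat -> cf q (to_list f K) j = cseq q f j.
Proof.
  intros Hj. rewrite cf_nthZ. apply cseq_ext.
  intros i Hi. apply nthZ_to_list. lia.
Qed.

Lemma is_loop_to_list q f K : loop_seq q f K -> is_loop q (to_list f K).
Proof.
  intros [Hp Hc]. split; [split|].
  - discriminate.
  - intros j Hj. rewrite len_to_list in Hj. rewrite cf_to_list by lia. now apply Hp.
  - unfold cval. now rewrite len_to_list, cf_to_list.
Qed.

Lemma proper_to_list f K : proper_seq f K -> proper (to_list f K).
Proof.
  intros Hpr j Hj. rewrite len_to_list in Hj.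
  change (nthZ (to_list f K) j <> 0%Z). rewrite nthZ_to_list by lia. now apply Hpr.
Qed.

Lemma weight_to_list q f K : weight q (to_list f K) = wseq q f K.
Proof.
  rewrite weight_nthZ, len_to_list. apply wseq_ext.
  intros i Hi. rewrite <- cf_nthZ. apply cf_to_list. lia.
Qed.

Lemma to_list_nontrivial f K : (0 < K)%nat -> to_list f K <> trivial_loop.
Proof.
  intros HK E. apply (f_equal len) in E.
  rewrite len_to_list in E. unfold len, trivial_loop in E. simpl in E. lia.
Qed.

Lemma loop_len_pos q m : is_loop q m -> m <> trivial_loop -> (0 < len m)%nat.
Proof.
  intros [[Hnil _] Hc] Hnt. destruct m as [|a [|b t]]; try congruence.
  - exfalso. apply Hnt. unfold cval in Hc. simpl in Hc.
    apply eq_IZR in Hc. now subst.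
  - unfold len. simpl. lia.
Qed.

Definition proper_loops_weight_one (q : R) : Prop :=
  forall m, is_loop q m -> proper m -> weight q m = 1.

Definition proper_loops_weight_const (q : R) : Prop :=
  forall m n, is_loop q m -> proper m -> m <> trivial_loop ->
    is_loop q n -> proper n -> n <> trivial_loop -> weight q m = weight q n.

Lemma loop_weight_of_unique q m : unique_weight q -> is_loop q m -> weight q m = 1.
Proof.
  intros HU [Hm Hc].
  assert (Ht : weight q trivial_loop = 1) by (unfold weight, len; simpl; ring).
  rewrite <- Ht. apply HU; [exact Hm| |exact Hc].
  split; [discriminate|unfold len; simpl; lia].
Qed.

Lemma loop_weight_one_of_proper q m :
  0 < q -> proper_loops_weight_one q -> is_loop q m -> weight q m = 1.
Proof.
  intros hq H1 Hm. apply loop_seq_nthZ in Hm as [Hp Hc].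
  destruct (proper_path_reduction q hq _ _ Hp) as [g [K [Hg [Hgpr [Hgc Hgw]]]]].
  rewrite weight_nthZ, <- Hgw, <- weight_to_list.
  apply H1; [apply is_loop_to_list; split; [exact Hg|congruence]|now apply proper_to_list].
Qed.

Lemma unique_weight_of_proper_loops q :
  0 < q -> proper_loops_weight_one q -> unique_weight q.
Proof.
  intros hq H1 m n Hm Hn Hmn.
  apply path_seq_nthZ in Hm, Hn. unfold cval in Hmn. rewrite !cf_nthZ in Hmn.
  destruct (loop_glue q _ _ _ _ hq Hm Hn Hmn) as [Hg Hw].
  rewrite <- weight_to_list in Hw.
  rewrite (loop_weight_one_of_proper q _ hq H1 (is_loop_to_list q _ _ Hg)) in Hw.
  rewrite !weight_nthZ, <- Hw. ring.
Qed.

Lemma proper_loops_weight_one_of_const q :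
  0 < q -> proper_loops_weight_const q -> proper_loops_weight_one q.
Proof.
  intros hq Hconst m Hm Hpr.
  destruct (list_eq_dec Z.eq_dec m trivial_loop) as [->|Hnt].
  { unfold weight, len. simpl. ring. }
  pose proof (loop_len_pos q m Hm Hnt) as HK.
  destruct (proper_loop_double q _ _ (loop_seq_nthZ q m Hm) Hpr HK) as [g [Hg [Hgpr Hgw]]].
  assert (Hgnt : to_list g (len m + len m) <> trivial_loop)
    by (apply to_list_nontrivial; lia).
  pose proof (Hconst _ m (is_loop_to_list q _ _ Hg) (proper_to_list _ _ Hgpr)
               Hgnt Hm Hpr Hnt) as E.
  rewrite weight_to_list, Hgw, <- weight_nthZ in E.
  assert (0 < weight q m).
  { rewrite weight_nthZ. apply wseq_pos; [exact hq|apply path_seq_nthZ, Hm]. }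
  nra.
Qed.

Theorem lemma4 (q : R) (hq : 0 < q) :
  (unique_weight q <->
     (forall m, is_loop q m -> proper m -> weight q m = 1)) /\
  ((forall m, is_loop q m -> proper m -> weight q m = 1) <->
     (forall m n, is_loop q m -> proper m -> m <> trivial_loop ->
                  is_loop q n -> proper n -> n <> trivial_loop ->
                  weight q m = weight q n)).
Proof.
  split; split.
  - intros HU m Hm _. exact (loop_weight_of_unique q m HU Hm).
  - exact (unique_weight_of_proper_loops q hq).
  - intros H1 m n Hm Hpm _ Hn Hpn _. now rewrite (H1 m Hm Hpm), (H1 n Hn Hpn).
  - exact (proper_loops_weight_one_of_const q hq).
Qed.
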